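(* A set of permutations $\{\pi_1,\dots,\pi_n\}\subseteq S_n$ such that $\mathrm{Des}(\pi_i)=\{i-1,i\}\cap[n-1]$ for all $i\in[n]$, or such that $\mathrm{Des}(\pi_i)=[n-1]\setminus\{i-1,i\}$ for all $i\in[n]$, is symmetric.
   Context: $\mathrm{Des}(w)=\{i\in[n-1]: w(i)>w(i+1)\}$. $F_{n,D}=\sum x_{i_1}\cdots x_{i_n}$ over $i_1\le\cdots\le i_n$ with $i_j<i_{j+1}$ whenever $j\in D$. A set $S\subseteq S_n$ is symmetric if $\sum_{w\in S}F_{n,\mathrm{Des}(w)}$ is a symmetric function. *)

From HB Require Import structures.
From mathcomp Require Import all_boot all_order all_algebra all_fingroup.
From mathcomp Require Import mpoly.
Set Implicit Arguments. Unset Strict Implicit. Unset Printing Implicit Defensive.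
Import GRing.Theory.
Local Open Scope ring_scope.

(* value w(j) of a permutation of 'I_n at a nat position j (0-indexed), 0 if out of range *)
Definition pval (n : nat) (w : 'S_n) (j : nat) : nat :=
  if insub j is Some k then val (w k) else 0%N.

(* Des(w) = { i in [n-1] : w(i) > w(i+1) }, positions 1-indexed:
   paper position i corresponds to ordinal i-1. *)
Definition Des (n : nat) (w : 'S_n) : pred nat :=
  fun i => [&& (0 < i)%N, (i < n)%N & (pval w i.-1 > pval w i)%N].

(* F_{n,D} restricted to the N variables x_1..x_N (here 'X_0..'X_(N-1)):
   sum of x_{i_1}...x_{i_n} over i_1 <= ... <= i_n with i_j < i_{j+1} for j in D
   (j 1-indexed; the 0-indexed tuple entry t (j-1) is i_j). *)
Definition admissible (n N : nat) (D : pred nat) (t : {ffun 'I_n -> 'I_N}) : bool :=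
  [forall j : 'I_n, forall k : 'I_n,
     (val k == (val j).+1) ==>
       if D (val k) then (val (t j) < val (t k))%N else (val (t j) <= val (t k))%N].

Definition Fund (N n : nat) (D : pred nat) : {mpoly int[N]} :=
  \sum_(t : {ffun 'I_n -> 'I_N} | admissible D t) \prod_(j < n) 'X_(t j).

(* A family of (bounded degree) quasisymmetric functions given by its restrictions
   f N to N variables (for every N) is symmetric iff every restriction is symmetric. *)
Definition sym_function (f : forall N : nat, {mpoly int[N]}) : Prop :=
  forall N : nat, f N \is symmetric.

Definition symmetric_set (n : nat) (S : {set 'S_n}) : Prop :=
  sym_function (fun N => \sum_(w in S) Fund N n (Des w)).

(* Expanding every F_{n,D} over weakly increasing index sequences t, the
   coefficient of the monomial x_t in the sum is the number of members whose
   descent set contains no plateau of t, i.e. no position j with t_{j-1} = t_j.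
   For D_i = {i-1, i} this means that position i lies in no plateau; for
   D_i = [n-1] \ {i-1, i} it means that every plateau is adjacent to i, which
   leaves n choices of i if t has no plateau, and otherwise 4 - k choices
   (none once k >= 4), where k is the number of positions lying in a plateau
   ([#|tied t|]).  This k is the total multiplicity of the variables occurring
   more than once in x_t, so the coefficient is invariant under permutation of
   the variables.  For n = 2 the descent sets D_1 and D_2 coincide, so the set
   may have a single element, which only rescales the coefficients. *)

From mathcomp Require Import all_boot all_order all_algebra all_fingroup.
From mathcomp Require Import mpoly zify.
Set Implicit Arguments. Unset Strict Implicit. Unset Printing Implicit Defensive.
Import Order.TTheory GRing.Theory.

Section Content.
Variables (n N : nat).
Implicit Types (t : {ffun 'I_n -> 'I_N}) (m : 'X_{1..N}).

Definition nondecr t : bool := sorted <=%O (codom t).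

Lemma nth_codom t x0 (j : 'I_n) : nth x0 (codom t) j = t j.
Proof. by rewrite codomE (nth_map j) ?size_enum_ord // nth_ord_enum. Qed.

Lemma nondecr_homo t : nondecr t -> {homo t : j k / j <= k}.
Proof.
move=> t_sorted j k le_jk.
have := @sorted_leq_nth _ <=%O le_trans le_refl (t j) (codom t) t_sorted j.
move=> /(_ k); rewrite !inE size_codom card_ord !ltn_ord !nth_codom.
by apply.
Qed.

Lemma nondecr_adjacent t :
  (forall j k : 'I_n, val k = (val j).+1 -> t j <= t k) -> nondecr t.
Proof.
move=> t_step; rewrite /nondecr; case: (posnP n) => [n0 | n_gt0].
  suff -> : codom t = [::] by [].
  by apply/size0nil; rewrite size_codom card_ord.
pose x0 := t (Ordinal n_gt0).
apply/(sortedP x0) => i; rewrite size_codom card_ord => lt_i1n.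
have := nth_codom t x0 (Ordinal (ltnW lt_i1n)); have := nth_codom t x0 (Ordinal lt_i1n).
by rewrite /= => -> ->; apply: t_step.
Qed.

Definition content t : 'X_{1..N} := (\sum_(j < n) U_(t j))%MM.

Lemma content_count t v : content t v = count_mem v (codom t).
Proof.
rewrite mnm_sumE codomE count_map -sum1_count [RHS]big_mkcond [RHS]big_enum /=.
by apply: eq_bigr => j _; rewrite mnm1E; case: (t j == v).
Qed.

Lemma mdeg_content t : mdeg (content t) = n.
Proof. by rewrite mdeg_sum (eq_bigr _ (fun j _ => mdeg1 (t j))) sum1_card card_ord. Qed.

Lemma prod_mpolyX_content (R : ringType) t :
  (\prod_(j < n) 'X_(t j))%R = 'X_[content t] :> {mpoly R[N]}.
Proof. by rewrite (big_morph _ (@mpolyXD _ _) (@mpolyX0 _ _)). Qed.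

Lemma content_inj : {in nondecr &, injective content}.
Proof.
move=> t1 t2 t1_sorted t2_sorted eq_content.
have perm_codom : perm_eq (codom t1) (codom t2).
  by apply/allP => v _; rewrite /= -!content_count eq_content.
have eq_codom := sorted_eq le_trans le_anti t1_sorted t2_sorted perm_codom.
by apply/ffunP => j; rewrite -(nth_codom t1 (t1 j)) eq_codom nth_codom.
Qed.

Lemma content_onto m : mdeg m = n -> exists2 t, nondecr t & content t = m.
Proof.
move=> deg_m; set s0 := flatten [seq nseq (m v) v | v <- enum 'I_N].
have perm_s : perm_eq (sort <=%O s0) s0 by rewrite perm_sort.
have size_s : size (sort <=%O s0) == n.
  rewrite (perm_size perm_s) size_flatten /shape -map_comp sumnE big_map.
  by rewrite -deg_m mdegE big_enum; apply/eqP/eq_bigr => v _; rewrite /= size_nseq.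
pose t := [ffun j => tnth (Tuple size_s) j].
have codom_t : codom t = sort <=%O s0.
  by rewrite codomE (eq_map (fun j => ffunE _ j)) map_tnth_enum.
exists t; first by rewrite /nondecr codom_t sort_sorted //; apply: le_total.
apply/mnmP => v; rewrite content_count codom_t (seq.permP perm_s).
rewrite count_flatten -map_comp sumnE big_map big_enum /= (bigD1 v) //=.
rewrite count_nseq /= eqxx mul1n big1 ?addn0 // => u /negbTE ne_uv.
by rewrite count_nseq /= ne_uv.
Qed.

Lemma mcoeff_sum_content (R : ringType) (G : 'X_{1..N} -> R) m :
  mcoeff m (\sum_(t | nondecr t) G (content t) *: 'X_[content t]) =
  ((mdeg m == n)%:R * G m)%R.
Proof.
rewrite raddf_sum /=.
case: (pickP (fun t => nondecr t && (content t == m))) => [t0 | no_t].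
  case/andP=> t0_sorted /eqP <-.
  rewrite (bigD1 t0) //= mcoeffZ mcoeffX eqxx mdeg_content eqxx mulr1 mul1r.
  rewrite big1 ?addr0 // => t /andP[t_sorted ne_t]; rewrite mcoeffZ mcoeffX.
  case: eqP => [eq_content|]; last by rewrite mulr0.
  by case/eqP: ne_t; apply: content_inj.
rewrite big1 => [|t t_sorted]; last first.
  by rewrite mcoeffZ mcoeffX; have := no_t t; rewrite t_sorted /= => ->; rewrite mulr0.
case: eqP => [deg_m|_]; last by rewrite mul0r.
case: (content_onto deg_m) => t t_sorted eq_m.
by have := no_t t; rewrite t_sorted eq_m eqxx.
Qed.

Lemma sum_content_symmetric (R : ringType) (G : 'X_{1..N} -> R) :
  (forall (s : 'S_N) m, G [multinom m (s i) | i < N] = G m) ->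
  (\sum_(t | nondecr t) G (content t) *: 'X_[content t])%R \is symmetric.
Proof.
move=> G_perm; apply/issymP => s; apply/mpolyP => m.
by rewrite mcoeff_sym !mcoeff_sum_content mdeg_mperm G_perm.
Qed.

Lemma contentE t v : content t v = \sum_(j < n) (t j == v).
Proof. by rewrite mnm_sumE; apply: eq_bigr => j _; rewrite mnm1E. Qed.

Lemma sum_content t (F : 'I_N -> nat) :
  \sum_(j < n) F (t j) = \sum_(v < N) content t v * F v.
Proof.
rewrite (partition_big t predT) //=; apply: eq_bigr => v _.
rewrite contentE big_distrl /= big_mkcond /=.
by apply: eq_bigr => j _; case: eqP => [->|]; rewrite ?mul1n ?mul0n.
Qed.
End Content.

Section Admissible.
Variables (n N : nat).
Implicit Types (D : pred nat) (t : {ffun 'I_n -> 'I_N}).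

Lemma admissible_ext D1 D2 t : D1 =1 D2 -> admissible D1 t = admissible D2 t.
Proof. by move=> eq_D; apply: eq_forallb => j; apply: eq_forallb => k; rewrite eq_D. Qed.

Lemma admissible_nondecr D t : admissible D t -> nondecr t.
Proof.
move=> t_adm; apply: nondecr_adjacent => j k k_succ.
move/forallP/(_ j)/forallP/(_ k)/implyP: t_adm => /(_ (introT eqP k_succ)).
by case: (D k) => // /ltnW.
Qed.

Lemma sum_FundE (I : finType) (A : {pred I}) (D : I -> pred nat) :
  (\sum_(i in A) Fund N n (D i) =
   \sum_(t : {ffun 'I_n -> 'I_N} | nondecr t)
     (\sum_(i in A) admissible (D i) t)%N%:R *: 'X_[content t])%R.
Proof.
rewrite /Fund; under eq_bigr do rewrite big_mkcond.
rewrite exchange_big (bigID (@nondecr n N)) /= [X in (_ + X)%R]big1 ?addr0 => [|t t_dis].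
  apply: eq_bigr => t _; rewrite prod_mpolyX_content natr_sum scaler_suml.
  by apply: eq_bigr => i _; case: (admissible _ _); rewrite ?scale1r ?scale0r.
apply: big1 => i _; case: ifP => // /admissible_nondecr t_sorted.
by rewrite t_sorted in t_dis.
Qed.
End Admissible.

Lemma sum_indicator (T : finType) (A : {pred T}) :
  \sum_(x : T) (x \in A : nat) = #|A|.
Proof. by rewrite -sum1_card [RHS]big_mkcond; apply: eq_bigr => x _; case: (x \in A). Qed.

Lemma sum_ord_interval m lo hi :
  \sum_(i < m) (lo <= i <= hi : nat) = minn m hi.+1 - lo.
Proof.
elim: m => [|m IHm]; first by rewrite big_ord0 min0n.
by rewrite big_ord_recr /= IHm; case: (leqP lo m); case: (leqP m hi) => /=; lia.
Qed.

Definition repeats N (m : 'X_{1..N}) : nat := \sum_(v < N) (1 < m v) * m v.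

Lemma repeats_perm N (s : 'S_N) (m : 'X_{1..N}) :
  repeats [multinom m (s i) | i < N] = repeats m.
Proof.
rewrite /repeats [RHS](reindex_inj (@perm_inj _ s)) /=.
by apply: eq_bigr => v _; rewrite mnmE.
Qed.

Definition pair_des n (c : bool) (i : 'I_n) : pred nat :=
  fun j => [&& 0 < j, j < n & c (+) ((j == i) || (j == i.+1))].

Definition window n (i : 'I_n) : {set 'I_n} := [set j : 'I_n | i <= j.+1 <= i.+2].

Section Ties.
Variables (n N : nat) (t : {ffun 'I_n -> 'I_N}).

Definition tie (j k : 'I_n) : bool := (k == j.+1 :> nat) && (t j == t k).

Definition tied : {set 'I_n} := [set j | [exists k, tie j k || tie k j]].

Lemma tie_tiedl j k : tie j k -> j \in tied.
Proof. by move=> tie_jk; rewrite inE; apply/existsP; exists k; rewrite tie_jk. Qed.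

Lemma tie_tiedr j k : tie j k -> k \in tied.
Proof. by move=> tie_jk; rewrite inE; apply/existsP; exists j; rewrite tie_jk orbT. Qed.

Lemma admissible_tie D : nondecr t ->
  admissible D t = [forall j, forall k, tie j k ==> ~~ D k].
Proof.
move=> t_sorted; apply: eq_forallb => j; apply: eq_forallb => k; rewrite /tie.
case: eqP => //= k_succ; have le_tjk : t j <= t k by apply: nondecr_homo => //; lia.
by case: (D k); rewrite ?implybT // ltn_neqAle le_tjk andbT implybF.
Qed.

Lemma nondecr_between (j l k : 'I_n) :
  nondecr t -> j <= l <= k -> t j = t k -> t l = t j.
Proof.
move=> t_sorted /andP[le_jl le_lk] t_jk; apply/val_inj/anti_leq.
by rewrite (nondecr_homo t_sorted le_jl) t_jk (nondecr_homo t_sorted le_lk).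
Qed.

Lemma tied_repeated j : nondecr t -> (j \in tied) = (1 < content t (t j)).
Proof.
move=> t_sorted.
have -> : content t (t j) = #|[set k | t k == t j]|.
  by rewrite contentE -sum_indicator; apply: eq_bigr => k _; rewrite inE.
have j_in : j \in [set k | t k == t j] by rewrite inE.
rewrite (cardsD1 j) j_in add1n ltnS card_gt0; apply/idP/set0Pn.
  rewrite inE => /existsP[k /orP[] /andP[/eqP k_succ /eqP t_eq]]; exists k;
    by rewrite !inE t_eq eqxx andbT; apply/eqP => k_j; rewrite k_j in k_succ; lia.
case=> k /setD1P[ne_kj]; rewrite inE => /eqP t_kj.
case: (ltngtP j k) => [lt_jk | lt_kj | /val_inj eq_jk];
  last by rewrite eq_jk eqxx in ne_kj.
  have lt_j1n : j.+1 < n := leq_ltn_trans lt_jk (ltn_ord k).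
  apply: (tie_tiedl (k := Ordinal lt_j1n)); rewrite /tie /= eqxx /= eq_sym.
  by rewrite (nondecr_between (j := j) (k := k)) //=; apply/andP; split.
have lt_pj_n : j.-1 < n := leq_ltn_trans (leq_pred _) (ltn_ord j).
apply: (tie_tiedr (j := Ordinal lt_pj_n)); rewrite /tie /= prednK; last lia.
by rewrite eqxx /= (nondecr_between (j := k) (k := j)) ?t_kj //=; lia.
Qed.

Lemma card_tied : nondecr t -> #|tied| = repeats (content t).
Proof.
move=> t_sorted; rewrite -sum_indicator.
under eq_bigr do rewrite tied_repeated //.
rewrite (sum_content t (fun v => (1 < content t v) : nat)).
by apply: eq_bigr => v _; rewrite mulnC.
Qed.

Lemma pair_des_tie c i j k :
  tie j k -> pair_des c i k = c (+) ((k == i) || (j == i)).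
Proof.
case/andP=> /eqP k_succ _.
by rewrite /pair_des ltn_ord -!val_eqE /= k_succ eqSS ltn0Sn val_eqE.
Qed.

Lemma admissible_pair_des i :
  nondecr t -> admissible (pair_des false i) t = (i \notin tied).
Proof.
move=> t_sorted; rewrite admissible_tie // inE negb_exists.
apply/forallP/forallP => [no_tie k | untied j]; last first.
  apply/forallP => k; apply/implyP => tie_jk; rewrite (pair_des_tie _ _ tie_jk) /=.
  apply/norP; split; apply/eqP => eq_i; rewrite eq_i in tie_jk.
    by move: (untied j); rewrite tie_jk orbT.
  by move: (untied k); rewrite tie_jk.
apply/negP => /orP[] tie_ik.
  move/forallP/(_ k)/implyP: (no_tie i) => /(_ tie_ik).
  by rewrite (pair_des_tie _ _ tie_ik) eqxx orbT.
move/forallP/(_ i)/implyP: (no_tie k) => /(_ tie_ik).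
by rewrite (pair_des_tie _ _ tie_ik) eqxx.
Qed.

Lemma admissible_pair_des_compl i :
  nondecr t -> admissible (pair_des true i) t = (tied \subset window i).
Proof.
move=> t_sorted; rewrite admissible_tie //; apply/forallP/subsetP => [within j | sub j].
  have tie_near x y : tie x y -> (y == i) || (x == i).
    move=> tie_xy; move/forallP/(_ y)/implyP: (within x) => /(_ tie_xy).
    by rewrite (pair_des_tie _ _ tie_xy) negbK.
  rewrite !inE => /existsP[k /orP[] /[dup] tie_jk /tie_near];
    by case/andP: tie_jk => /eqP k_succ _; case/orP => /eqP <-; lia.
apply/forallP => k; apply/implyP => tie_jk; rewrite (pair_des_tie _ _ tie_jk) negbK.
move: (sub _ (tie_tiedl tie_jk)) (sub _ (tie_tiedr tie_jk)); rewrite !inE.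
case/andP: tie_jk => /eqP k_succ _ j_near k_near.
case: (ltngtP k i) => [lt_ki | lt_ik | /ord_inj ->]; rewrite ?eqxx //; first lia.
by apply/orP; right; apply/eqP/ord_inj; lia.
Qed.

Lemma sum_admissible_pair_des : nondecr t ->
  \sum_(i < n) admissible (pair_des false i) t = n - #|tied|.
Proof.
move=> t_sorted; under eq_bigr do rewrite admissible_pair_des // -in_setC.
by rewrite sum_indicator cardsCs setCK card_ord.
Qed.

Lemma tied_min_succ a : a \in tied -> (forall j, j \in tied -> a <= j) ->
  exists2 k, k \in tied & k = a.+1 :> nat.
Proof.
rewrite inE => /existsP[k /orP[] tie_ak] a_min.
  by exists k; [apply: tie_tiedr tie_ak | case/andP: tie_ak => /eqP].
by have := a_min k (tie_tiedl tie_ak); case/andP: tie_ak => /eqP a_succ _; lia.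
Qed.

Lemma tied_max_pred b : b \in tied -> (forall j, j \in tied -> j <= b) ->
  exists2 k, k \in tied & k.+1 = b :> nat.
Proof.
rewrite inE => /existsP[k /orP[] tie_bk] b_max.
  by have := b_max k (tie_tiedr tie_bk); case/andP: tie_bk => /eqP k_succ _; lia.
by exists k; [apply: tie_tiedl tie_bk | case/andP: tie_bk => /eqP].
Qed.

Lemma sum_subset_window :
  \sum_(i < n) (tied \subset window i) = if #|tied| == 0 then n else 4 - #|tied|.
Proof.
case: (set_0Vmem tied) => [-> | [x0 x0_tied]].
  under eq_bigr do rewrite sub0set.
  by rewrite cards0 sum_nat_const card_ord muln1.
case: (arg_minnP (@nat_of_ord n) x0_tied) => a a_tied a_min.
case: (arg_maxnP (@nat_of_ord n) x0_tied) => b b_tied b_max.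
have [a1 a1_tied a1_val] := tied_min_succ a_tied a_min.
have [b1 b1_tied b1_val] := tied_max_pred b_tied b_max.
have lt_ab : a < b by rewrite -a1_val; apply: b_max.
have sub_window i : (tied \subset window i) = (b.-1 <= i <= a.+1).
  apply/subsetP/idP => [sub | near_i j j_tied].
    by move: (sub _ a_tied) (sub _ b_tied); rewrite !inE; lia.
  by move: (a_min _ j_tied) (b_max _ j_tied); rewrite inE; lia.
under eq_bigr do rewrite sub_window.
have -> : (#|tied| == 0) = false.
  by apply/negbTE; rewrite cards_eq0; apply/set0Pn; exists x0.
rewrite sum_ord_interval.
have lt_bn := ltn_ord b.
case: (leqP b a.+2) => [le_b_a2 | lt_a2_b].
  suff -> : #|tied| = minn n b.+1 - a by lia.
  rewrite -sum_indicator -sum_ord_interval.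
  apply: eq_bigr => j _; congr nat_of_bool; apply/idP/idP => [j_tied | j_range].
    by apply/andP; split; [apply: a_min | apply: b_max].
  have : [|| j == a, j == a1 | j == b] by rewrite -!(inj_eq (@ord_inj n)); lia.
  by case/or3P => /eqP ->.
suff : 4 <= #|tied| by lia.
have uniq4 : uniq [:: a; a1; b1; b].
  by rewrite /= !inE -!(inj_eq (@ord_inj n)) /=; lia.
rewrite -[4]/(size [:: a; a1; b1; b]) -(card_uniqP uniq4).
apply/subset_leq_card/subsetP => x.
by rewrite !in_cons in_nil orbF => /or4P[] /eqP ->.
Qed.
End Ties.

Definition pair_count (c : bool) (n k : nat) : nat :=
  if c then (if k == 0 then n else 4 - k) else n - k.

Lemma sum_admissible_pair_count n N c (t : {ffun 'I_n -> 'I_N}) :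
  nondecr t ->
  \sum_(i < n) admissible (pair_des c i) t = pair_count c n (repeats (content t)).
Proof.
move=> t_sorted; rewrite -card_tied //; case: c => /=.
  under eq_bigr do rewrite admissible_pair_des_compl //.
  exact: sum_subset_window.
exact: sum_admissible_pair_des.
Qed.

Lemma pair_des_inj n c (i i' : 'I_n) :
  n != 2 -> pair_des c i =1 pair_des c i' -> i = i'.
Proof.
move=> n_ne2 eq_des; apply/ord_inj.
have near_eq x :
    0 < x < n -> ((x == i) || (x == i.+1)) = ((x == i') || (x == i'.+1)).
  case/andP=> x_gt0 x_ltn.
  by move: (eq_des x); rewrite /pair_des x_gt0 x_ltn => /addbI.
clear eq_des; wlog lt_ii' : i i' near_eq / i < i'.
  move=> wlog_lt; case: (ltngtP i i') => [lt_ii' | lt_i'i | //]; first exact: wlog_lt.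
  by apply/esym/wlog_lt => // x /near_eq.
have lt_i'n := ltn_ord i'; exfalso.
case: (ltnP i'.+1 n) => [lt_i'1n | ge_i'1n].
  by have := near_eq i'.+1; rewrite lt_i'1n eqxx orbT => /(_ isT) /orP[] /eqP; lia.
case: (posnP i) => [i0 | i_gt0].
  have lt_1n : 1 < n by lia.
  by have := near_eq 1; rewrite lt_1n i0 /= => /(_ isT) /esym /orP[] /eqP; lia.
by have := near_eq i; rewrite i_gt0 ltn_ord eqxx => /(_ isT) /esym /orP[] /eqP; lia.
Qed.

Lemma pair_des_ord2 n c (i i' : 'I_n) : n = 2 -> pair_des c i =1 pair_des c i'.
Proof.
move=> n2; have near1 (j : 'I_n) : (1 == j) || (1 == j.+1).
  by case: j => [[|[|k]] lt_kn] //; move: lt_kn; rewrite n2.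
case=> [|[|x]] //; first by rewrite /pair_des /= !near1.
by rewrite /pair_des; have -> : x.+2 < n = false by rewrite n2.
Qed.

Section ImageOfPairDescents.
Variables (n N : nat) (c : bool) (pi : 'I_n -> 'S_n) (t : {ffun 'I_n -> 'I_N}).
Hypothesis desE : forall i, Des (pi i) =1 pair_des c i.

Lemma sum_admissible_image_inj : n != 2 ->
  \sum_(w in [set pi i | i : 'I_n]) admissible (Des w) t =
  \sum_(i < n) admissible (pair_des c i) t.
Proof.
move=> n_ne2; rewrite big_imset => [|i i' _ _ eq_pi].
  by apply: eq_big => // i _; rewrite (admissible_ext _ (desE i)).
by apply: (pair_des_inj (c := c) n_ne2) => j; rewrite -!desE eq_pi.
Qed.

Lemma sum_admissible_image_ord2 : n = 2 ->
  \sum_(w in [set pi i | i : 'I_n]) admissible (Des w) t =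
  #|[set pi i | i : 'I_n]| * (\sum_(i < n) admissible (pair_des c i) t)./2.
Proof.
move=> n2; have mul_n m : n * m = m.*2 by rewrite n2 mul2n.
have i0 : 'I_n by rewrite n2; exact: ord0.
have adm_i0 (i : 'I_n) :
    admissible (pair_des c i) t = admissible (pair_des c i0) t.
  exact: admissible_ext (pair_des_ord2 c i i0 n2).
under [in RHS]eq_bigr => i _ do rewrite adm_i0.
rewrite (eq_bigr (fun=> admissible (pair_des c i0) t : nat)) => [|w /imsetP[i _ ->]].
  by rewrite !sum_nat_const card_ord mul_n doubleK.
by rewrite (admissible_ext _ (desE i)) adm_i0.
Qed.
End ImageOfPairDescents.

Theorem proposition4p15 (n : nat) (pi : 'I_n -> 'S_n) :
  ((forall (i : 'I_n) (j : nat),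
       Des (pi i) j = [&& (0 < j)%N, (j < n)%N & ((j == val i) || (j == (val i).+1))])
   \/
   (forall (i : 'I_n) (j : nat),
       Des (pi i) j = [&& (0 < j)%N, (j < n)%N & ~~ ((j == val i) || (j == (val i).+1))])) ->
  symmetric_set [set pi i | i : 'I_n].
Proof.
move=> hDes N.
have [c desE] : exists c, forall i, Des (pi i) =1 pair_des c i.
  by case: hDes => hDes; [exists false | exists true] => i j; rewrite hDes.
set S := [set pi i | i : 'I_n].
pose weight k := if n == 2 then #|S| * (pair_count c n k)./2 else pair_count c n k.
have coefE (t : {ffun 'I_n -> 'I_N}) : nondecr t ->
    \sum_(w in S) admissible (Des w) t = weight (repeats (content t)).
  move=> t_sorted; rewrite /weight /= -(sum_admissible_pair_count c t_sorted).
  case: eqP => [n2 | /eqP n_ne2]; first exact: sum_admissible_image_ord2.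
  exact: sum_admissible_image_inj.
rewrite /symmetric_set /sym_function sum_FundE.
under eq_bigr => t t_sorted do rewrite coefE //.
apply: (@sum_content_symmetric n N _ (fun m => (weight (repeats m))%:R%R)) => s m.
by rewrite repeats_perm.
Qed.
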